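(* There exist a locally finite semilattice $T$ and a submultiplicative weight $\omega$ on $T$ such that $\ell^1_\omega(T)$ is not AMNM.
   Context: A semilattice is a commutative semigroup in which every element is idempotent; it is locally finite if every finitely generated subsemigroup is finite. A weight on $T$ is a function $\omega:T\to(0,\infty)$; it is submultiplicative if $\omega(xy)\le\omega(x)\omega(y)$ for all $x,y$. $\ell^1_\omega(T)$ is the Banach space of $a:T\to\mathbb C$ with $\|a\|=\sum_{t}|a(t)|\omega(t)<\infty$, a Banach algebra under convolution ($\delta_x*\delta_y=\delta_{xy}$). For a bounded linear map $T:A\to B$ between Banach algebras, $\operatorname{def}(T)=\sup\{\|T(xy)-T(x)T(y)\|:\|x\|,\|y\|\le1\}$; $\operatorname{Mult}(A,B)$ is the set of bounded linear multiplicative maps $A\to B$ (including $0$). A Banach algebra $A$ is AMNM if for every $\varepsilon>0$ there is $\delta>0$ such that every $\psi\in A^*$ with $\operatorname{def}(\psi)\le\delta$ satisfies $\operatorname{dist}_{A^*}(\psi,\operatorname{Mult}(A,\mathbb C))\le\varepsilon$. *)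

From Stdlib Require Import Reals List.
Import ListNotations.
Open Scope R_scope.

Definition C : Type := (R * R)%type.
Definition C0 : C := (0, 0).
Definition Cadd (z w : C) : C := (fst z + fst w, snd z + snd w).
Definition Copp (z : C) : C := (- fst z, - snd z).
Definition Csub (z w : C) : C := Cadd z (Copp w).
Definition Cmul (z w : C) : C :=
  (fst z * fst w - snd z * snd w, fst z * snd w + snd z * fst w).
Definition Cnorm (z : C) : R := sqrt (fst z * fst z + snd z * snd z).

Definition Csum {I : Type} (f : I -> C) (L : list I) : C :=
  fold_right (fun i acc => Cadd (f i) acc) C0 L.

(* unordered (net) sum over an arbitrary index type: the finite partial sums
   over finite sets containing L0 converge to s *)
Definition has_sum {I : Type} (f : I -> C) (s : C) : Prop :=
  forall eps, 0 < eps -> exists L0 : list I,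
    forall L : list I, NoDup L -> incl L0 L -> Cnorm (Csub (Csum f L) s) < eps.

Definition is_semilattice {T : Type} (op : T -> T -> T) : Prop :=
  (forall x y z, op x (op y z) = op (op x y) z) /\
  (forall x y, op x y = op y x) /\
  (forall x, op x x = x).

Inductive generated {T : Type} (op : T -> T -> T) (L : list T) : T -> Prop :=
| gen_base : forall t, In t L -> generated op L t
| gen_op : forall x y, generated op L x -> generated op L y ->
           generated op L (op x y).

Definition locally_finite {T : Type} (op : T -> T -> T) : Prop :=
  forall L : list T, exists M : list T, forall t, generated op L t -> In t M.

Definition is_weight {T : Type} (w : T -> R) : Prop := forall t, 0 < w t.
Definition submultiplicative {T : Type} (op : T -> T -> T) (w : T -> R) : Prop :=
  forall x y, w (op x y) <= w x * w y.

Definition wsum {T : Type} (w : T -> R) (a : T -> C) (L : list T) : R :=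
  fold_right (fun t acc => Cnorm (a t) * w t + acc) 0 L.

(* ||a|| <= r, i.e. sup over finite subsets of the weighted sums is <= r *)
Definition norm_le {T : Type} (w : T -> R) (a : T -> C) (r : R) : Prop :=
  forall L : list T, NoDup L -> wsum w a L <= r.

Definition in_l1w {T : Type} (w : T -> R) (a : T -> C) : Prop :=
  exists r, norm_le w a r.

Definition fadd {T : Type} (a b : T -> C) : T -> C := fun t => Cadd (a t) (b t).
Definition fscale {T : Type} (l : C) (a : T -> C) : T -> C := fun t => Cmul l (a t).

(* c = a * b (convolution): c(t) = sum_{x y = t} a(x) b(y) *)
Definition conv_rel {T : Type} (op : T -> T -> T) (a b c : T -> C) : Prop :=
  forall t, has_sum (fun p : {p : T * T | op (fst p) (snd p) = t} =>
                       Cmul (a (fst (proj1_sig p))) (b (snd (proj1_sig p))))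
                    (c t).

Definition is_bdd_linear {T : Type} (w : T -> R) (psi : (T -> C) -> C) : Prop :=
  (forall a b, in_l1w w a -> in_l1w w b -> psi (fadd a b) = Cadd (psi a) (psi b)) /\
  (forall l a, in_l1w w a -> psi (fscale l a) = Cmul l (psi a)) /\
  (exists M, forall a r, in_l1w w a -> norm_le w a r -> Cnorm (psi a) <= M * r).

Definition defect_le {T : Type} (op : T -> T -> T) (w : T -> R)
  (psi : (T -> C) -> C) (d : R) : Prop :=
  forall a b c, in_l1w w a -> in_l1w w b -> norm_le w a 1 -> norm_le w b 1 ->
    conv_rel op a b c -> Cnorm (Csub (psi c) (Cmul (psi a) (psi b))) <= d.

(* phi in Mult(A, C) (bounded, linear, multiplicative; includes 0) *)
Definition is_mult {T : Type} (op : T -> T -> T) (w : T -> R)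
  (phi : (T -> C) -> C) : Prop :=
  is_bdd_linear w phi /\
  forall a b c, in_l1w w a -> in_l1w w b -> conv_rel op a b c ->
    phi c = Cmul (phi a) (phi b).

Definition opnorm_diff_le {T : Type} (w : T -> R) (psi phi : (T -> C) -> C)
  (e : R) : Prop :=
  forall a, in_l1w w a -> norm_le w a 1 -> Cnorm (Csub (psi a) (phi a)) <= e.

(* dist_{A*}(psi, Mult(A,C)) <= e  (infimum <= e) *)
Definition dist_mult_le {T : Type} (op : T -> T -> T) (w : T -> R)
  (psi : (T -> C) -> C) (e : R) : Prop :=
  forall eta, 0 < eta -> exists phi, is_mult op w phi /\
    opnorm_diff_le w psi phi (e + eta).

Definition AMNM {T : Type} (op : T -> T -> T) (w : T -> R) : Prop :=
  forall eps, 0 < eps -> exists delta, 0 < delta /\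
    forall psi, is_bdd_linear w psi -> defect_le op w psi delta ->
      dist_mult_le op w psi eps.

(* The semilattice consists of the Boolean cubes {0,1}^k (bit strings of length
   k, multiplied by bitwise "or"), for all k, glued along a common absorbing
   zero: strings of different lengths multiply to zero.  A string that is not
   all-ones has weight 1 + (number of ones); all-ones strings and the zero have
   weight 1.  This weight is submultiplicative, and the semilattice is locally
   finite since generated subsemigroups stay among strings of bounded length.

   For each k, let psi_k be the functional given by the indicator of the
   non-top strings of length k.  It fails to be multiplicative only on pairs
   x, y of non-top strings whose join is the top; then x and y carry together
   at least k ones, so w x * w y >= k + 1 and def(psi_k) <= 1/(k+1).  On the
   other hand every character phi within distance 1/4 of psi_k must agree with
   psi_k on the point masses of weight <= 2, hence equal 1 on the k unit
   strings; multiplicativity then forces phi = 1 on the top string, where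
   psi_k vanishes.  So small defect does not imply closeness to Mult. *)

From Pilot Require Import Defs.
From Stdlib Require Import Reals List Lra Lia ProofIrrelevance FinFun.
From Coquelicot Require Complex.
Import ListNotations.
Open Scope R_scope.

(* [C] from [Defs] is shadowed by the binomial coefficient of [Reals]. *)
Local Notation CC := Defs.C.

(* The modulus on C = R * R agrees with Coquelicot's [Cmod], whose algebraic
   properties we reuse. *)
Lemma Cnorm_Cmod z : Cnorm z = Complex.Cmod z.
Proof. unfold Cnorm, Complex.Cmod. f_equal. simpl. ring. Qed.

Lemma Cnorm_triangle z u : Cnorm (Cadd z u) <= Cnorm z + Cnorm u.
Proof. rewrite !Cnorm_Cmod. apply Complex.Cmod_triangle. Qed.

Lemma Cnorm_mul z u : Cnorm (Cmul z u) = Cnorm z * Cnorm u.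
Proof. rewrite !Cnorm_Cmod. apply Complex.Cmod_mult. Qed.

Lemma Cnorm_ge0 z : 0 <= Cnorm z.
Proof. apply sqrt_pos. Qed.

Lemma Cnorm_real r : Cnorm (r, 0) = Rabs r.
Proof. rewrite Cnorm_Cmod. apply Complex.Cmod_R. Qed.

Lemma Cnorm_C0 : Cnorm C0 = 0.
Proof. unfold C0. rewrite Cnorm_real. apply Rabs_R0. Qed.

Lemma Cnorm_eq0_eq z u : Cnorm (Csub z u) = 0 -> z = u.
Proof.
  rewrite Cnorm_Cmod. intros H. apply Complex.Cmod_eq_0 in H.
  destruct z, u. unfold Csub, Cadd, Copp in H; simpl in H.
  injection H as H1 H2. f_equal; lra.
Qed.

Ltac cring := unfold Cadd, Cmul, Csub, Copp, C0; apply injective_projections; simpl; ring.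

Lemma C_idempotent (z : CC) : z = Cmul z z -> z = (0, 0) \/ z = (1, 0).
Proof.
  destruct z as [a b]. unfold Cmul; simpl. intros H. injection H as H1 H2.
  assert (Hb : b = 0).
  { destruct (Req_dec b 0) as [|Hb]; auto.
    assert (Ha : a = /2).
    { apply Rmult_eq_reg_l with (2 * b); [lra|]. apply Rmult_integral_contrapositive; lra. }
    subst a. nra. }
  subst b. destruct (Req_dec a 0) as [->|Ha]; [left|right]; auto.
  f_equal. apply Rmult_eq_reg_l with a; lra.
Qed.

Section FiniteSums.
Context {I : Type}.

Lemma Csum_app (f : I -> CC) L1 L2 : Csum f (L1 ++ L2) = Cadd (Csum f L1) (Csum f L2).
Proof. induction L1; simpl; [|rewrite IHL1]; cring. Qed.

Lemma Csum_ext (f g : I -> CC) L : (forall x, In x L -> f x = g x) -> Csum f L = Csum g L.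
Proof. induction L; simpl; intros H; auto. rewrite H, IHL; auto. Qed.

Lemma Csum_add (f g : I -> CC) L :
  Csum (fun x => Cadd (f x) (g x)) L = Cadd (Csum f L) (Csum g L).
Proof. induction L; simpl; [|rewrite IHL]; cring. Qed.

Lemma Csum_sub (f g : I -> CC) L :
  Csum (fun x => Csub (f x) (g x)) L = Csub (Csum f L) (Csum g L).
Proof. induction L; simpl; [|rewrite IHL]; cring. Qed.

Lemma Csum_scale (z : CC) (f : I -> CC) L :
  Csum (fun x => Cmul z (f x)) L = Cmul z (Csum f L).
Proof. induction L; simpl; [|rewrite IHL]; cring. Qed.

Lemma Csum_zero (f : I -> CC) L : (forall x, In x L -> f x = C0) -> Csum f L = C0.
Proof. induction L; simpl; intros H; auto. rewrite H, IHL; auto. cring. Qed.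

Lemma Csum_single (f : I -> CC) L s :
  NoDup L -> In s L -> (forall x, In x L -> x <> s -> f x = C0) -> Csum f L = f s.
Proof.
  induction L as [|a L IH]; simpl; intros HN Hin H; [contradiction|].
  inversion HN as [|? ? HaL HL]; subst. destruct Hin as [<-|Hin].
  - rewrite Csum_zero; [cring|]. intros x Hx. apply H; auto. intros ->; contradiction.
  - rewrite H, IH; auto; [cring|]. intros ->; contradiction.
Qed.

Definition rsum (f : I -> R) (L : list I) : R := fold_right (fun x acc => f x + acc) 0 L.

Lemma rsum_le (f g : I -> R) L : (forall x, In x L -> f x <= g x) -> rsum f L <= rsum g L.
Proof.
  induction L; simpl; intros H; [lra|].
  pose proof (H a (or_introl eq_refl)). pose proof (IHL (fun x h => H x (or_intror h))). lra.
Qed.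

Lemma rsum_ge0 (f : I -> R) L : (forall x, In x L -> 0 <= f x) -> 0 <= rsum f L.
Proof.
  induction L; simpl; intros H; [lra|].
  pose proof (H a (or_introl eq_refl)). pose proof (IHL (fun x h => H x (or_intror h))). lra.
Qed.

Lemma rsum_app (f : I -> R) L1 L2 : rsum f (L1 ++ L2) = rsum f L1 + rsum f L2.
Proof. induction L1; simpl; lra. Qed.

Lemma rsum_scale c (f : I -> R) L : rsum (fun x => c * f x) L = c * rsum f L.
Proof. induction L; simpl; lra. Qed.

Lemma Cnorm_Csum (f : I -> CC) L : Cnorm (Csum f L) <= rsum (fun x => Cnorm (f x)) L.
Proof.
  induction L; simpl.
  - rewrite Cnorm_C0; lra.
  - eapply Rle_trans; [apply Cnorm_triangle|lra].
Qed.

Lemma has_sum_finite (f : I -> CC) s L :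
  NoDup L -> (forall x, In x L) -> has_sum f s -> Csum f L = s.
Proof.
  intros HN Hall Hs. apply Cnorm_eq0_eq.
  destruct (Rle_lt_dec (Cnorm (Csub (Csum f L) s)) 0) as [Hle|Hlt].
  - pose proof (Cnorm_ge0 (Csub (Csum f L) s)); lra.
  - destruct (Hs _ Hlt) as [L0 HL0]. specialize (HL0 L HN (fun x _ => Hall x)). lra.
Qed.
End FiniteSums.

Lemma Csum_map {I J} (f : J -> CC) (g : I -> J) L :
  Csum f (map g L) = Csum (fun x => f (g x)) L.
Proof. induction L; simpl; [|rewrite IHL]; auto. Qed.

Lemma rsum_map {I J} (f : J -> R) (g : I -> J) L :
  rsum f (map g L) = rsum (fun x => f (g x)) L.
Proof. induction L; simpl; [|rewrite IHL]; auto. Qed.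

Lemma Csum_prod {I J} (f : I -> CC) (g : J -> CC) X Y :
  Cmul (Csum f X) (Csum g Y) = Csum (fun p => Cmul (f (fst p)) (g (snd p))) (list_prod X Y).
Proof.
  induction X; simpl; [cring|].
  rewrite Csum_app, <- IHX, Csum_map. simpl. rewrite Csum_scale. cring.
Qed.

Lemma rsum_prod {I J} (f : I -> R) (g : J -> R) X Y :
  rsum f X * rsum g Y = rsum (fun p => f (fst p) * g (snd p)) (list_prod X Y).
Proof.
  induction X; simpl; [ring|].
  rewrite rsum_app, <- IHX, rsum_map. simpl. rewrite rsum_scale. ring.
Qed.

Lemma Csum_swap {I J} (f : I -> J -> CC) X Y :
  Csum (fun x => Csum (fun y => f x y) Y) X = Csum (fun y => Csum (fun x => f x y) X) Y.
Proof.
  induction X; simpl.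
  - rewrite Csum_zero; auto.
  - rewrite IHX, <- Csum_add. auto.
Qed.

Lemma NoDup_list_prod {I J} (X : list I) (Y : list J) :
  NoDup X -> NoDup Y -> NoDup (list_prod X Y).
Proof.
  induction 1 as [|x X Hx HX IH]; simpl; intros HY; [constructor|].
  apply NoDup_app; auto.
  - apply Injective_map_NoDup; auto. intros a b H; injection H; auto.
  - intros [u v] H1 H2. apply in_map_iff in H1 as [y [Hy _]]. injection Hy as <- <-.
    apply in_prod_iff in H2 as [H2 _]. contradiction.
Qed.

Section WeightedSemigroup.
Variables (X : Type) (X_dec : forall x y : X, {x = y} + {x <> y}).
Variables (mul : X -> X -> X) (w : X -> R).
Hypothesis w_nonneg : forall x, 0 <= w x.

Lemma norm_le_point (a : X -> CC) x :
  (forall t, t <> x -> a t = C0) -> norm_le w a (Cnorm (a x) * w x).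
Proof.
  intros Ha L HL. unfold wsum.
  induction HL as [|t L HtL HL IH]; simpl.
  - pose proof (Cnorm_ge0 (a x)); pose proof (w_nonneg x); nra.
  - destruct (X_dec t x) as [->|Hne].
    + assert (Hzero : fold_right (fun t acc => Cnorm (a t) * w t + acc) 0 L = 0).
      { clear IH HL. induction L as [|u L IHL]; simpl; auto.
        rewrite Ha, Cnorm_C0, IHL; [ring| |]; simpl in HtL; tauto. }
      lra.
    + rewrite Ha, Cnorm_C0 by exact Hne. lra.
Qed.

Definition delta (x : X) : X -> CC := fun t => if X_dec t x then (1, 0) else C0.

Lemma delta_l1 x : in_l1w w (delta x).
Proof.
  exists (Cnorm (delta x x) * w x). apply norm_le_point.
  intros t Ht. unfold delta. destruct (X_dec t x); [contradiction|auto].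
Qed.

Lemma conv_delta x y : conv_rel mul (delta x) (delta y) (delta (mul x y)).
Proof.
  set (P := fun p : X * X => mul (fst p) (snd p) = mul x y).
  intros t e He. unfold delta at 3. destruct (X_dec t (mul x y)) as [->|Ht].
  - exists [exist P (x, y) eq_refl]. intros L HL Hinc.
    rewrite (Csum_single _ L (exist P (x, y) eq_refl)); auto with datatypes.
    + simpl. unfold delta. destruct (X_dec x x), (X_dec y y); try congruence.
      replace (Csub _ _) with C0 by cring. rewrite Cnorm_C0; auto.
    + intros [[u v] Hq] _ Hne. simpl. unfold delta.
      destruct (X_dec u x), (X_dec v y); try cring. subst.
      exfalso; apply Hne. f_equal. apply proof_irrelevance.
  - exists []. intros L _ _. rewrite Csum_zero.
    + replace (Csub C0 C0) with C0 by cring. rewrite Cnorm_C0; auto.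
    + intros [[u v] Hq] _. simpl in *. unfold delta.
      destruct (X_dec u x), (X_dec v y); try cring. subst. contradiction.
Qed.

Lemma char_delta phi x y :
  is_mult mul w phi -> phi (delta (mul x y)) = Cmul (phi (delta x)) (phi (delta y)).
Proof. intros [_ Hmul]. apply Hmul; auto using delta_l1, conv_delta. Qed.

Lemma char_delta_01 phi x :
  is_mult mul w phi -> mul x x = x -> phi (delta x) = (0, 0) \/ phi (delta x) = (1, 0).
Proof.
  intros Hphi Hx. apply C_idempotent. rewrite <- (char_delta phi x x Hphi), Hx. auto.
Qed.

(* If a character phi is within distance e < 1/2 of a functional psi taking a
   value z in {0,1} at an idempotent t of weight at most 2, then phi agrees
   with psi at t: test both on delta_t / 2, which lies in the unit ball. *)
Lemma char_near_point psi phi e t z :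
  is_mult mul w phi -> is_bdd_linear w psi -> opnorm_diff_le w psi phi e -> e < /2 ->
  mul t t = t -> w t <= 2 -> z = (0, 0) \/ z = (1, 0) -> psi (delta t) = z ->
  phi (delta t) = z.
Proof.
  intros Hphi Hpsi Hclose He Ht Hw Hz Hpsit.
  set (half := ((/2, 0) : CC)).
  set (a := fscale half (delta t)).
  assert (Ha_ball : norm_le w a 1).
  { intros L HL. eapply Rle_trans; [apply (norm_le_point a t); auto|].
    - intros u Hu. unfold a, fscale, delta. destruct (X_dec u t); [contradiction|cring].
    - unfold a, fscale, delta. destruct (X_dec t t); [|congruence].
      replace (Cmul half (1, 0)) with half by cring.
      unfold half. rewrite Cnorm_real, Rabs_right; lra. }
  specialize (Hclose a (ex_intro _ 1 Ha_ball) Ha_ball).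
  destruct Hpsi as [_ [Hpsi_scale _]]. pose proof Hphi as [[_ [Hphi_scale _]] _].
  unfold a in Hclose. rewrite Hpsi_scale, Hphi_scale, Hpsit in Hclose by apply delta_l1.
  replace (Csub (Cmul half z) (Cmul half (phi (delta t))))
    with (Cmul half (Csub z (phi (delta t)))) in Hclose by cring.
  rewrite Cnorm_mul in Hclose. unfold half in Hclose.
  rewrite Cnorm_real, Rabs_right in Hclose by lra.
  assert (Hgap : Cnorm (Csub z (phi (delta t))) < 1) by lra.
  destruct (char_delta_01 phi t Hphi Ht) as [Hp|Hp]; rewrite Hp in *;
    destruct Hz as [->| ->]; auto; exfalso;
    unfold Csub, Cadd, Copp in Hgap; simpl in Hgap;
    replace (0 + - 0) with 0 in Hgap by ring;
    rewrite Cnorm_real in Hgap; [rewrite Rabs_right in Hgap|rewrite Rabs_left in Hgap]; lra.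
Qed.

(* Closure makes psi(a * b) a finite double sum over E x E. *)
Section FinitelySupported.
Variables (E : list X) (f : X -> CC).
Hypothesis E_nodup : NoDup E.
Hypothesis f_supported : forall x, ~ In x E -> f x = C0.
Hypothesis E_factor_closed : forall x y, In (mul x y) E -> In x E /\ In y E.

Definition fs_functional (a : X -> CC) : CC := Csum (fun t => Cmul (f t) (a t)) E.

Lemma fs_functional_delta t : In t E -> fs_functional (delta t) = f t.
Proof.
  intros Ht. unfold fs_functional. rewrite (Csum_single _ _ t); auto.
  - unfold delta. destruct (X_dec t t); [cring|congruence].
  - intros x _ Hx. unfold delta. destruct (X_dec x t); [contradiction|cring].
Qed.

Lemma fs_functional_bdd_linear :
  (forall x, Cnorm (f x) <= w x) -> is_bdd_linear w fs_functional.
Proof.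
  intros Hf. split; [|split].
  - intros a b _ _. unfold fs_functional, fadd. rewrite <- Csum_add.
    apply Csum_ext. intros; cring.
  - intros l a _. unfold fs_functional, fscale. rewrite <- Csum_scale.
    apply Csum_ext. intros; cring.
  - exists 1. intros a r _ Hr. rewrite Rmult_1_l.
    eapply Rle_trans; [apply Cnorm_Csum|]. eapply Rle_trans; [|exact (Hr E E_nodup)].
    apply rsum_le. intros x _. rewrite Cnorm_mul.
    pose proof (Hf x); pose proof (Cnorm_ge0 (a x)); pose proof (Cnorm_ge0 (f x)). nra.
Qed.

Fixpoint fibre (t : X) (P : list (X * X)) : list {p : X * X | mul (fst p) (snd p) = t} :=
  match P with
  | [] => []
  | p :: P' =>
      match X_dec (mul (fst p) (snd p)) t with
      | left H => exist _ p H :: fibre t P'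
      | right _ => fibre t P'
      end
  end.

Lemma fibre_In t P q : In (proj1_sig q) P <-> In q (fibre t P).
Proof.
  induction P as [|p P IH]; simpl; [tauto|].
  destruct (X_dec _ _) as [H|H]; simpl; rewrite IH.
  - split; intros [Hq|Hq]; auto; left.
    + destruct q; simpl in *; subst. f_equal. apply proof_irrelevance.
    + subst; auto.
  - split; [intros [Hq|Hq]|]; auto. destruct q; simpl in *; subst; contradiction.
Qed.

Lemma fibre_NoDup t P : NoDup P -> NoDup (fibre t P).
Proof.
  induction 1 as [|p P Hp HP IH]; simpl; [constructor|].
  destruct (X_dec _ _); auto. constructor; auto.
  rewrite <- fibre_In. simpl. exact Hp.
Qed.

Lemma fibre_sum t (G : X * X -> CC) P :
  Csum (fun q => G (proj1_sig q)) (fibre t P) =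
  Csum (fun p => if X_dec (mul (fst p) (snd p)) t then G p else C0) P.
Proof.
  induction P as [|p P IH]; simpl; auto.
  destruct (X_dec _ _); simpl; rewrite IH; auto. cring.
Qed.

Lemma conv_on_E a b c t : conv_rel mul a b c -> In t E ->
  c t = Csum (fun p => if X_dec (mul (fst p) (snd p)) t
                       then Cmul (a (fst p)) (b (snd p)) else C0) (list_prod E E).
Proof.
  intros Hc Ht. rewrite <- fibre_sum. symmetry.
  apply has_sum_finite; [apply fibre_NoDup, NoDup_list_prod; auto| |apply Hc].
  intros [[x y] Hq]. apply fibre_In. simpl in *. subst t.
  apply E_factor_closed in Ht as [Hx Hy]. apply in_prod; auto.
Qed.

Lemma fs_functional_conv a b c : conv_rel mul a b c ->
  fs_functional c =
  Csum (fun p => Cmul (f (mul (fst p) (snd p))) (Cmul (a (fst p)) (b (snd p))))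
       (list_prod E E).
Proof.
  intros Hc. unfold fs_functional.
  rewrite (Csum_ext _ (fun t => Csum (fun p => Cmul (f t)
     (if X_dec (mul (fst p) (snd p)) t then Cmul (a (fst p)) (b (snd p)) else C0))
     (list_prod E E))).
  2:{ intros t Ht. rewrite (conv_on_E a b c t Hc Ht), Csum_scale. auto. }
  rewrite Csum_swap. apply Csum_ext. intros p _.
  destruct (in_dec X_dec (mul (fst p) (snd p)) E) as [Hin|Hout].
  - rewrite (Csum_single _ _ (mul (fst p) (snd p))); auto.
    + destruct (X_dec _ _); [auto|congruence].
    + intros x _ Hx. destruct (X_dec _ _); [congruence|cring].
  - rewrite f_supported by exact Hout. rewrite Csum_zero; [cring|].
    intros x Hx. destruct (X_dec _ _); [subst; contradiction|cring].
Qed.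

(* The defect of the functional is controlled by the pointwise defect of f
   relative to the weight: psi(ab) - psi(a)psi(b) is the double sum of
   a(x) b(y) (f(xy) - f(x) f(y)) over E x E. *)
Lemma fs_functional_defect d : 0 <= d ->
  (forall x y, In x E -> In y E ->
     Cnorm (Csub (f (mul x y)) (Cmul (f x) (f y))) <= d * (w x * w y)) ->
  defect_le mul w fs_functional d.
Proof.
  intros Hd Hf a b c _ _ Ha Hb Hc.
  set (na := rsum (fun t => Cnorm (a t) * w t) E).
  set (nb := rsum (fun t => Cnorm (b t) * w t) E).
  assert (Hna : 0 <= na <= 1).
  { split; [apply rsum_ge0|apply (Ha E E_nodup)].
    intros x _; pose proof (Cnorm_ge0 (a x)); pose proof (w_nonneg x); nra. }
  assert (Hnb : 0 <= nb <= 1).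
  { split; [apply rsum_ge0|apply (Hb E E_nodup)].
    intros x _; pose proof (Cnorm_ge0 (b x)); pose proof (w_nonneg x); nra. }
  rewrite (fs_functional_conv a b c Hc). unfold fs_functional.
  rewrite Csum_prod, <- Csum_sub.
  eapply Rle_trans; [apply Cnorm_Csum|].
  apply Rle_trans with (d * (na * nb)).
  2:{ assert (na * nb <= 1) by nra. nra. }
  unfold na, nb. rewrite rsum_prod, <- rsum_scale. apply rsum_le.
  intros [x y] Hp. apply in_prod_iff in Hp as [Hx Hy]. simpl.
  replace (Csub (Cmul (f (mul x y)) (Cmul (a x) (b y)))
                (Cmul (Cmul (f x) (a x)) (Cmul (f y) (b y))))
    with (Cmul (Cmul (a x) (b y)) (Csub (f (mul x y)) (Cmul (f x) (f y)))) by cring.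
  rewrite !Cnorm_mul. pose proof (Hf x y Hx Hy).
  pose proof (Cnorm_ge0 (a x)); pose proof (Cnorm_ge0 (b y)).
  apply Rle_trans with (Cnorm (a x) * Cnorm (b y) * (d * (w x * w y))); [|lra].
  apply Rmult_le_compat_l; [apply Rmult_le_pos|]; auto.
Qed.
End FinitelySupported.
End WeightedSemigroup.

(* Bit strings of all lengths together with an absorbing zero [None]. *)
Definition Cube : Type := option (list bool).

Fixpoint bor (l l' : list bool) : list bool :=
  match l, l' with
  | b :: l1, b' :: l1' => orb b b' :: bor l1 l1'
  | _, _ => []
  end.

Definition cup (x y : Cube) : Cube :=
  match x, y with
  | Some l, Some l' => if Nat.eqb (length l) (length l') then Some (bor l l') else None
  | _, _ => None
  end.

Fixpoint ones (l : list bool) : nat :=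
  match l with [] => 0%nat | b :: l => ((if b then 1 else 0) + ones l)%nat end.
Definition full (l : list bool) : bool := forallb (fun b => b) l.

Definition weight (x : Cube) : R :=
  match x with
  | Some l => if full l then 1 else 1 + INR (ones l)
  | None => 1
  end.

Lemma Cube_dec (x y : Cube) : {x = y} + {x <> y}.
Proof. decide equality. apply list_eq_dec, Bool.bool_dec. Qed.

Lemma bor_length l l' : length l = length l' -> length (bor l l') = length l.
Proof. revert l'; induction l; destruct l'; simpl; intros; auto; discriminate. Qed.

Lemma bor_comm l l' : bor l l' = bor l' l.
Proof. revert l'; induction l; destruct l'; simpl; auto. rewrite IHl, Bool.orb_comm; auto. Qed.

Lemma bor_idem l : bor l l = l.
Proof. induction l; simpl; auto. rewrite IHl, Bool.orb_diag; auto. Qed.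

Lemma bor_assoc l1 l2 l3 : bor l1 (bor l2 l3) = bor (bor l1 l2) l3.
Proof. revert l2 l3; induction l1; destruct l2, l3; simpl; auto. rewrite IHl1, Bool.orb_assoc; auto. Qed.

Lemma cup_assoc x y z : cup x (cup y z) = cup (cup x y) z.
Proof.
  destruct x as [a|], y as [b|], z as [c|]; simpl; auto.
  - destruct (Nat.eqb_spec (length b) (length c)), (Nat.eqb_spec (length a) (length b));
      simpl; rewrite ?bor_length by auto.
    + destruct (Nat.eqb_spec (length a) (length b)); [|contradiction].
      destruct (Nat.eqb_spec (length a) (length c)); [|lia]. rewrite bor_assoc; auto.
    + destruct (Nat.eqb_spec (length a) (length b)); [contradiction|auto].
    + destruct (Nat.eqb_spec (length a) (length c)); [lia|auto].
    + auto.
  - destruct (Nat.eqb (length a) (length b)); auto.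
Qed.

Lemma cup_comm x y : cup x y = cup y x.
Proof.
  destruct x as [a|], y as [b|]; simpl; auto.
  rewrite Nat.eqb_sym. destruct (Nat.eqb (length b) (length a)); auto. rewrite bor_comm; auto.
Qed.

Lemma cup_idem x : cup x x = x.
Proof. destruct x as [a|]; simpl; auto. rewrite Nat.eqb_refl, bor_idem; auto. Qed.

Lemma cup_semilattice : is_semilattice cup.
Proof. repeat split; intros; auto using cup_assoc, cup_comm, cup_idem. Qed.

Lemma cup_Some x y l : cup x y = Some l ->
  exists l1 l2, x = Some l1 /\ y = Some l2 /\ length l1 = length l /\ length l2 = length l.
Proof.
  destruct x as [a|], y as [b|]; simpl; try discriminate.
  destruct (Nat.eqb_spec (length a) (length b)); try discriminate. intros H; injection H as <-.
  exists a, b. rewrite bor_length; auto.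
Qed.

Fixpoint all_strings (n : nat) : list (list bool) :=
  match n with
  | 0 => [[]]
  | S n => map (cons true) (all_strings n) ++ map (cons false) (all_strings n)
  end.

Lemma all_strings_spec n l : In l (all_strings n) <-> length l = n.
Proof.
  revert l; induction n; intros l; simpl.
  - split; [intros [<-|[]]; auto|]. destruct l; [auto|discriminate].
  - rewrite in_app_iff, !in_map_iff. split.
    + intros [[l' [<- H]]|[l' [<- H]]]; simpl; f_equal; apply IHn; auto.
    + destruct l as [|[] l]; simpl; intros H; try discriminate;
        [left|right]; exists l; rewrite IHn; auto.
Qed.

Lemma all_strings_NoDup n : NoDup (all_strings n).
Proof.
  induction n; simpl; [repeat constructor; auto|].
  apply NoDup_app; try (apply Injective_map_NoDup; auto; intros a b H; injection H; auto).
  intros a H1 H2. apply in_map_iff in H1 as [x [<- _]].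
  apply in_map_iff in H2 as [y [Hy _]]. discriminate.
Qed.

Definition cube_length (x : Cube) : nat := match x with None => 0%nat | Some l => length l end.

Lemma cup_length x y : (cube_length (cup x y) <= Nat.max (cube_length x) (cube_length y))%nat.
Proof.
  destruct x as [a|], y as [b|]; simpl; try lia.
  destruct (Nat.eqb_spec (length a) (length b)); simpl; try lia. rewrite bor_length; lia.
Qed.

(* A finite set of generators only produces strings of bounded length. *)
Lemma cup_locally_finite : locally_finite cup.
Proof.
  intros L. set (K := fold_right (fun x acc => Nat.max (cube_length x) acc) 0%nat L).
  exists (None :: flat_map (fun n => map Some (all_strings n)) (seq 0 (S K))).
  assert (HK : forall t, generated cup L t -> (cube_length t <= K)%nat).
  { induction 1 as [t Ht|x y _ Hx _ Hy].
    - unfold K. clear K. induction L; simpl in *; [contradiction|].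
      destruct Ht; subst; [lia|]. specialize (IHL H); lia.
    - pose proof (cup_length x y); lia. }
  intros t Ht. specialize (HK t Ht). destruct t as [l|]; [right|left; auto].
  apply in_flat_map. exists (length l). split.
  - apply in_seq. simpl in HK; lia.
  - apply in_map, all_strings_spec; auto.
Qed.

Lemma weight_ge1 x : 1 <= weight x.
Proof.
  destruct x as [l|]; simpl; [|lra].
  destruct (full l); [lra|]. pose proof (pos_INR (ones l)); lra.
Qed.

Lemma weight_nonneg x : 0 <= weight x.
Proof. pose proof (weight_ge1 x); lra. Qed.

Lemma ones_bor l l' : (ones (bor l l') <= ones l + ones l')%nat.
Proof.
  revert l'; induction l; destruct l'; simpl; try lia.
  specialize (IHl l'). destruct a, b; simpl; lia.
Qed.

Lemma full_bor l l' : length l = length l' -> full l = true -> full (bor l l') = true.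
Proof.
  revert l'; induction l; destruct l'; simpl; intros; auto.
  apply andb_prop in H0 as [-> H0]. simpl. apply IHl; auto.
Qed.

Lemma full_ones l : full l = true -> ones l = length l.
Proof. induction l; simpl; auto. intros H; apply andb_prop in H as [-> H]. simpl; auto. Qed.

(* Submultiplicativity: a join has at most as many ones as its two factors
   together, and it is a top string whenever one of the factors is. *)
Lemma weight_submultiplicative : submultiplicative cup weight.
Proof.
  intros x y. pose proof (weight_ge1 x); pose proof (weight_ge1 y).
  destruct x as [a|], y as [b|]; simpl in *; try nra.
  destruct (Nat.eqb_spec (length a) (length b)); simpl; [|nra].
  destruct (full a) eqn:Ea; [rewrite full_bor by auto; lra|].
  destruct (full b) eqn:Eb; [rewrite bor_comm, full_bor by auto; lra|].
  destruct (full (bor a b)); [nra|].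
  pose proof (ones_bor a b) as H1. apply le_INR in H1. rewrite plus_INR in H1.
  pose proof (pos_INR (ones a)); pose proof (pos_INR (ones b)). nra.
Qed.

Definition cube (k : nat) : list Cube := map Some (all_strings k).

Definition nontop (k : nat) (x : Cube) : bool :=
  match x with
  | Some l => Nat.eqb (length l) k && negb (full l)
  | None => false
  end.

Definition indicator (k : nat) (x : Cube) : CC := if nontop k x then (1, 0) else (0, 0).

Definition psi (k : nat) : (Cube -> CC) -> CC := fs_functional Cube (cube k) (indicator k).

Lemma cube_NoDup k : NoDup (cube k).
Proof.
  apply Injective_map_NoDup; [|apply all_strings_NoDup].
  intros a b H; injection H; auto.
Qed.

Lemma In_cube k x : In x (cube k) <-> exists l, x = Some l /\ length l = k.
Proof.
  unfold cube. rewrite in_map_iff. split.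
  - intros [l [<- Hl]]. exists l. rewrite <- all_strings_spec. auto.
  - intros [l [-> Hl]]. exists l. rewrite all_strings_spec. auto.
Qed.

Lemma indicator_supported k x : ~ In x (cube k) -> indicator k x = C0.
Proof.
  intros Hx. unfold indicator. destruct (nontop k x) eqn:Hn; [|reflexivity].
  exfalso. apply Hx, In_cube. destruct x as [l|]; [|discriminate].
  apply andb_prop in Hn as [Hn _]. apply Nat.eqb_eq in Hn. eauto.
Qed.

Lemma cube_factor_closed k x y : In (cup x y) (cube k) -> In x (cube k) /\ In y (cube k).
Proof.
  rewrite !In_cube. intros [l [Hxy Hl]].
  apply cup_Some in Hxy as [l1 [l2 [-> [-> [H1 H2]]]]]. split; eexists; split; eauto; lia.
Qed.

Lemma indicator_le_weight k x : Cnorm (indicator k x) <= weight x.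
Proof.
  pose proof (weight_ge1 x). unfold indicator.
  destruct (nontop k x); rewrite Cnorm_real; [rewrite Rabs_R1|rewrite Rabs_R0]; lra.
Qed.

(* The indicator is multiplicative up to d * w x * w y once d (k + 1) >= 1:
   it fails only when two non-top strings join to the top, and then together
   they carry at least k ones. *)
Lemma indicator_defect k d x y : In x (cube k) -> In y (cube k) ->
  0 < d -> 1 <= d * (INR k + 1) ->
  Cnorm (Csub (indicator k (cup x y)) (Cmul (indicator k x) (indicator k y)))
    <= d * (weight x * weight y).
Proof.
  intros Hx Hy Hd Hk. pose proof (weight_ge1 x); pose proof (weight_ge1 y).
  apply In_cube in Hx as [l1 [-> H1]]. apply In_cube in Hy as [l2 [-> H2]].
  assert (Hzero : forall z, z = C0 -> Cnorm z <= d * (weight (Some l1) * weight (Some l2))).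
  { intros z ->. rewrite Cnorm_C0. apply Rmult_le_pos; [lra|]. apply Rmult_le_pos; lra. }
  set (W := d * (weight (Some l1) * weight (Some l2))) in *.
  unfold cup. rewrite H1, H2, Nat.eqb_refl. unfold indicator, nontop.
  rewrite bor_length by congruence. rewrite H1, H2, Nat.eqb_refl. simpl.
  destruct (full l1) eqn:F1; [rewrite full_bor by congruence; apply Hzero; cring|].
  destruct (full l2) eqn:F2; [rewrite bor_comm, full_bor by congruence; apply Hzero; cring|].
  destruct (full (bor l1 l2)) eqn:F3; simpl; [|apply Hzero; cring].
  replace (Csub (0, 0) (Cmul (1, 0) (1, 0))) with ((-1, 0) : CC) by cring.
  rewrite Cnorm_real, Rabs_left by lra. unfold W; simpl. rewrite F1, F2.
  apply full_ones in F3. rewrite bor_length in F3 by congruence.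
  pose proof (ones_bor l1 l2) as Hones. rewrite F3, H1 in Hones.
  apply le_INR in Hones. rewrite plus_INR in Hones.
  pose proof (pos_INR (ones l1)); pose proof (pos_INR (ones l2)).
  assert (INR k + 1 <= (1 + INR (ones l1)) * (1 + INR (ones l2))) by nra. nra.
Qed.

Lemma psi_bdd_linear k : is_bdd_linear weight (psi k).
Proof. apply fs_functional_bdd_linear; [apply cube_NoDup|apply indicator_le_weight]. Qed.

Lemma psi_defect k d : 0 < d -> 1 <= d * (INR k + 1) -> defect_le cup weight (psi k) d.
Proof.
  intros Hd Hk. apply (fs_functional_defect Cube Cube_dec cup weight).
  - apply weight_nonneg.
  - apply cube_NoDup.
  - apply indicator_supported.
  - apply cube_factor_closed.
  - lra.
  - intros x y Hx Hy. apply indicator_defect; auto.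
Qed.

Lemma ones_app l1 l2 : ones (l1 ++ l2) = (ones l1 + ones l2)%nat.
Proof. induction l1; simpl; [|rewrite IHl1]; lia. Qed.

Lemma ones_repeat_false n : ones (repeat false n) = 0%nat.
Proof. induction n; simpl; auto. Qed.

Lemma full_repeat_true n : full (repeat true n) = true.
Proof. induction n; simpl; auto. Qed.

Lemma full_false l : In false l -> full l = false.
Proof.
  intros Hl. destruct (full l) eqn:Hf; auto.
  apply forallb_forall with (x := false) in Hf; auto.
Qed.

Lemma bor_repeat_prefix j l l' :
  bor (repeat true j ++ l) (repeat false j ++ l') = repeat true j ++ bor l l'.
Proof. induction j; simpl; [|rewrite IHj]; auto. Qed.

Lemma indicator_01 k x : indicator k x = (0, 0) \/ indicator k x = (1, 0).
Proof. unfold indicator; destruct (nontop k x); auto. Qed.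

Section NoCharacterNearPsi.
Variables (k : nat) (phi : (Cube -> CC) -> CC) (e : R).
Hypothesis k_ge2 : (2 <= k)%nat.
Hypothesis phi_char : is_mult cup weight phi.
Hypothesis phi_close : opnorm_diff_le weight (psi k) phi e.
Hypothesis e_small : e < /2.

Local Notation point := (delta Cube Cube_dec).

Definition prefix (j : nat) : Cube := Some (repeat true j ++ repeat false (k - j)).
Definition unit (j : nat) : Cube := Some (repeat false j ++ true :: repeat false (k - S j)).
Definition top : Cube := Some (repeat true k).

Lemma phi_light_point t :
  In t (cube k) -> weight t <= 2 -> phi (point t) = indicator k t.
Proof.
  intros Ht Hw.
  apply (char_near_point Cube Cube_dec cup weight weight_nonneg (psi k) phi e);
    auto using psi_bdd_linear, cup_idem, indicator_01.
  apply fs_functional_delta; auto using cube_NoDup.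
Qed.

Lemma unit_string_not_full j : (j < k)%nat ->
  full (repeat false j ++ true :: repeat false (k - S j)) = false.
Proof.
  intros Hj. apply full_false. apply in_or_app. destruct j as [|j].
  - right. right. destruct (k - 1)%nat as [|n] eqn:Hn; [lia|left; auto].
  - left. left. auto.
Qed.

Lemma phi_unit j : (j < k)%nat -> phi (point (unit j)) = (1, 0).
Proof.
  intros Hj.
  assert (Hlen : length (repeat false j ++ true :: repeat false (k - S j)) = k).
  { rewrite length_app; simpl; rewrite !repeat_length. lia. }
  rewrite phi_light_point; unfold unit.
  - unfold indicator, nontop. rewrite Hlen, Nat.eqb_refl, unit_string_not_full; auto.
  - apply In_cube; eauto.
  - simpl. rewrite unit_string_not_full, ones_app, ones_repeat_false by auto.
    simpl. rewrite ones_repeat_false. simpl. lra.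
Qed.

Lemma phi_top : phi (point top) = (0, 0).
Proof.
  rewrite phi_light_point; unfold top.
  - unfold indicator, nontop. rewrite full_repeat_true, Bool.andb_false_r. auto.
  - apply In_cube. exists (repeat true k). split; auto using repeat_length.
  - simpl. rewrite full_repeat_true. lra.
Qed.

Lemma cup_prefix_unit j : (j < k)%nat -> cup (prefix j) (unit j) = prefix (S j).
Proof.
  intros Hj. unfold cup, prefix, unit.
  rewrite !length_app, !repeat_length. simpl. rewrite repeat_length.
  replace (j + (k - j))%nat with (j + S (k - S j))%nat by lia. rewrite Nat.eqb_refl.
  replace (k - j)%nat with (S (k - S j)) by lia.
  rewrite bor_repeat_prefix. simpl. rewrite bor_idem.
  rewrite app_comm_cons, repeat_cons, <- app_assoc. reflexivity.
Qed.

(* By multiplicativity phi is 1 on every prefix, since prefix (j+1) is the join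
   of prefix j and the j-th unit string. *)
Lemma phi_prefix j : (1 <= j <= k)%nat -> phi (point (prefix j)) = (1, 0).
Proof.
  induction j as [|j IH]; intros Hj; [lia|].
  destruct (Nat.eq_dec j 0) as [->|Hj0]; [apply (phi_unit 0); lia|].
  rewrite <- cup_prefix_unit by lia.
  rewrite (char_delta Cube Cube_dec cup weight weight_nonneg phi _ _ phi_char).
  rewrite IH, phi_unit by lia. cring.
Qed.

Lemma no_character_near_psi : False.
Proof.
  pose proof (phi_prefix k ltac:(lia)) as Hk.
  unfold prefix in Hk. rewrite Nat.sub_diag, app_nil_r in Hk.
  fold top in Hk. rewrite phi_top in Hk. injection Hk. lra.
Qed.
End NoCharacterNearPsi.

Theorem theoremt :
  exists (T : Type) (op : T -> T -> T) (w : T -> R),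
    is_semilattice op /\ locally_finite op /\
    is_weight w /\ submultiplicative op w /\
    ~ AMNM op w.
Proof.
  exists Cube, cup, weight.
  split; [exact cup_semilattice|]. split; [exact cup_locally_finite|].
  split; [intros x; pose proof (weight_ge1 x); lra|].
  split; [exact weight_submultiplicative|].
  intros Hamnm. destruct (Hamnm (1/8)) as [d [Hd Hdelta]]; [lra|].
  (* choose k >= 2 with d (k + 1) >= 1, so that def(psi_k) <= d *)
  destruct (INR_unbounded (/ d)) as [n Hn].
  set (k := (n + 2)%nat).
  assert (Hk : 1 <= d * (INR k + 1)).
  { unfold k. rewrite plus_INR. simpl. pose proof (pos_INR n).
    apply Rmult_lt_compat_l with (r := d) in Hn; [|lra].
    rewrite Rinv_r in Hn by lra. nra. }
  destruct (Hdelta (psi k) (psi_bdd_linear k) (psi_defect k d Hd Hk) (1/8))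
    as [phi [Hphi Hclose]]; [lra|].
  apply (no_character_near_psi k phi (1/8 + 1/8)); auto; [unfold k; lia|lra].
Qed.
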